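(* Let $e\ge 1$ and let $(x_n)_{n\in\mathbb{Z}}$ be any doubly infinite path in $X_{PGL_2(F)}$. Then there exist $\alpha,\tau\in\hat G^{(e)}$ such that $\alpha(x_n)=x_{-n}$ and $\tau(x_n)=x_{n+1}$ for all $n\in\mathbb{Z}$.
   Context: Let $F$ be a non-archimedean local field with ring of integers $\mathfrak{o}$, uniformizer $\varpi$, and finite residue field of cardinality $q$. $X=X_{PGL_2(F)}$ is the Bruhat–Tits tree of $PGL_2(F)$: its vertices are homothety classes $[L]$ (under $F^\times$) of $\mathfrak{o}$-lattices $L\subset F^2$, and $[L],[L']$ are joined by an edge iff there are representatives with $\varpi L\subsetneq L'\subsetneq L$; it is a $(q+1)$-regular tree. $d$ is the path-length distance on vertices; $\mathrm{Aut}(X)$ is the group of distance-preserving bijections of the vertex set, with the topology of pointwise convergence. $GL_2(F)$ acts on lattices through its linear action on $F^2$, the centre acts trivially, and this gives an embedding $PGL_2(F)\hookrightarrow\mathrm{Aut}(X)$. For an edge $\eta=\{x_1,x_2\}$ and $e\ge1$, $B(\eta,e)=\{y: \min(d(y,x_1),d(y,x_2))\le e\}$. Define $\hat G^{(e)}=\{g\in\mathrm{Aut}(X):\ \text{for every edge }\eta\ \text{there is } g'\in PGL_2(F)\text{ with } g|_{B(\eta,e)}=g'|_{B(\eta,e)}\}$. A doubly infinite path is a sequence $(x_n)_{n\in\mathbb{Z}}$ of distinct vertices with $x_n,x_{n+1}$ adjacent for all $n$. *)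

From HB Require Import structures.
From mathcomp Require Import all_boot all_order all_algebra.
Set Implicit Arguments. Unset Strict Implicit. Unset Printing Implicit Defensive.
Import Order.TTheory GRing.Theory Num.Theory.
Local Open Scope ring_scope.

(** The valuation [v : F -> int] is only
    constrained on nonzero elements (v 0 = +oo conventionally). *)

Definition in_o (F : fieldType) (v : F -> int) (x : F) : Prop :=
  x = 0 \/ 0 <= v x.

Definition in_m (F : fieldType) (v : F -> int) (x : F) : Prop :=
  x = 0 \/ 0 < v x.

Definition small (F : fieldType) (v : F -> int) (N : int) (x : F) : Prop :=
  x = 0 \/ N <= v x.

Definition is_discrete_valuation (F : fieldType) (v : F -> int) (pi : F) : Prop :=
  [/\ (forall x y : F, x != 0 -> y != 0 -> v (x * y) = v x + v y),
      (forall x y : F, x != 0 -> y != 0 -> x + y != 0 ->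
          Num.min (v x) (v y) <= v (x + y)),
      pi != 0 & v pi = 1].

Definition valuation_complete (F : fieldType) (v : F -> int) : Prop :=
  forall u : nat -> F,
    (forall N : int, exists M : nat, forall m n : nat,
        (M <= m)%N -> (M <= n)%N -> small v N (u m - u n)) ->
    exists l : F, forall N : int, exists M : nat, forall n : nat,
        (M <= n)%N -> small v N (u n - l).

(* the residue field o/m is finite: o is covered by finitely many cosets of m *)
Definition finite_residue_field (F : fieldType) (v : F -> int) : Prop :=
  exists s : seq F, forall a : F, in_o v a -> exists2 b, b \in s & in_m v (a - b).

Definition nonarch_local_field (F : fieldType) (v : F -> int) (pi : F) : Prop :=
  [/\ is_discrete_valuation v pi, valuation_complete v & finite_residue_field v].

Definition vset (F : fieldType) := 'cV[F]_2 -> Prop.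

(* an o-lattice: L = o b1 + o b2 for a basis (b1,b2) of F^2, i.e. L = g o^2
   with g invertible (columns of g are the basis). *)
Definition is_lattice (F : fieldType) (v : F -> int) (L : vset F) : Prop :=
  exists g : 'M[F]_2, g \in unitmx /\
    forall w : 'cV[F]_2, L w <-> exists c : 'cV[F]_2, (forall i, in_o v (c i 0)) /\ w = g *m c.

Definition scale_set (F : fieldType) (a : F) (L : vset F) : vset F :=
  fun w => exists u, L u /\ w = a *: u.

Definition mat_image (F : fieldType) (g : 'M[F]_2) (L : vset F) : vset F :=
  fun w => exists u, L u /\ w = g *m u.

Definition homothetic (F : fieldType) (L L' : vset F) : Prop :=
  exists a : F, a != 0 /\ forall w, L' w <-> scale_set a L w.

Definition is_hclass (F : fieldType) (v : F -> int) (C : vset F -> Prop) : Prop :=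
  exists L, is_lattice v L /\ forall L', C L' <-> (is_lattice v L' /\ homothetic L L').

Record vertex (F : fieldType) (v : F -> int) := Vertex {
  vcls : vset F -> Prop;
  vcls_ok : is_hclass v vcls }.

Definition strict_subset (F : fieldType) (A B : vset F) : Prop :=
  (forall w, A w -> B w) /\ exists w, B w /\ ~ A w.

Definition adj (F : fieldType) (v : F -> int) (pi : F) (x y : vertex v) : Prop :=
  exists L L', vcls x L /\ vcls y L' /\
    strict_subset (scale_set pi L) L' /\ strict_subset L' L.

Inductive walk (F : fieldType) (v : F -> int) (pi : F) :
    nat -> vertex v -> vertex v -> Prop :=
  | walk0 x : walk pi 0 x x
  | walkS n x z y : adj pi x z -> walk pi n z y -> walk pi n.+1 x y.

Definition dist_le (F : fieldType) (v : F -> int) (pi : F)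
    (x y : vertex v) (n : nat) : Prop :=
  exists2 m, (m <= n)%N & walk pi m x y.

Definition is_aut (F : fieldType) (v : F -> int) (pi : F)
    (g : vertex v -> vertex v) : Prop :=
  bijective g /\
  forall x y n, dist_le pi x y n <-> dist_le pi (g x) (g y) n.

(* the image of the vertex x under h in GL_2(F) (hence PGL_2(F)) is y *)
Definition mat_maps (F : fieldType) (v : F -> int)
    (h : 'M[F]_2) (x y : vertex v) : Prop :=
  forall L, vcls x L -> vcls y (mat_image h L).

Definition in_ball (F : fieldType) (v : F -> int) (pi : F)
    (x1 x2 : vertex v) (e : nat) (y : vertex v) : Prop :=
  dist_le pi y x1 e \/ dist_le pi y x2 e.

Definition Ghat (F : fieldType) (v : F -> int) (pi : F) (e : nat)
    (g : vertex v -> vertex v) : Prop :=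
  is_aut pi g /\
  forall x1 x2 : vertex v, adj pi x1 x2 ->
    exists2 h : 'M[F]_2, h \in unitmx &
      forall y, in_ball pi x1 x2 e y -> mat_maps h y (g y).

Definition dinf_path (F : fieldType) (v : F -> int) (pi : F)
    (x : int -> vertex v) : Prop :=
  injective x /\ forall n : int, adj pi (x n) (x (n + 1)).

(** Key fact: a doubly infinite path (x_n) is an apartment.  There is
    P in GL_2(F) with x_n = [P (o + pi^n o)] and x_(-n) = [P (pi^n o + o)]
    for all n : nat.  With the reflection J = [[0,1],[1,0]] and the
    translation D = diag(1, pi) one has J (o + pi^n o) = pi^n o + o and
    D (o + pi^n o) = o + pi^(n+1) o, so alpha = P J P^-1 and tau = P D P^-1
    act on the path as required; being in PGL_2(F) they lie in every hat G^(e). *)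
From HB Require Import structures.
From mathcomp Require Import all_boot all_order all_algebra.
From mathcomp Require Import zify ring.
From Stdlib Require Import FunctionalExtensionality PropExtensionality.
From Stdlib Require Import ProofIrrelevance ClassicalEpsilon.
Import Order.TTheory GRing.Theory Num.Theory.
Local Open Scope ring_scope.
Set Implicit Arguments. Unset Strict Implicit. Unset Printing Implicit Defensive.

Section Tree.
Variable K : fieldType.
Variable v : K -> int.
Variable pi : K.
Hypothesis hv : is_discrete_valuation v pi.

Lemma v_mul x y : x != 0 -> y != 0 -> v (x * y) = v x + v y.
Proof. by case: hv => h _ _ _; apply: h. Qed.
Lemma v_add x y : x != 0 -> y != 0 -> x + y != 0 -> Num.min (v x) (v y) <= v (x + y).
Proof. by case: hv => _ h _ _; apply: h. Qed.
Lemma pi_neq0 : pi != 0. Proof. by case: hv => _ _ h _. Qed.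
Lemma v_pi : v pi = 1. Proof. by case: hv => _ _ _ h. Qed.

Lemma v_one : v 1 = 0.
Proof. have h : v 1 = v 1 + v 1 by rewrite -{1}[1]mulr1 v_mul ?oner_neq0. lia. Qed.
Lemma v_opp x : x != 0 -> v (- x) = v x.
Proof.
move=> nx; have n1 : (-1 : K) != 0 by rewrite oppr_eq0 oner_neq0.
have h : v 1 = v (-1) + v (-1) by rewrite -{1}[1]mulr1 -mulrNN v_mul.
rewrite v_one in h; rewrite -mulN1r v_mul //; lia.
Qed.
Lemma v_inv x : x != 0 -> v x^-1 = - v x.
Proof.
move=> nx; have nx' : x^-1 != 0 by rewrite invr_eq0.
by have := v_mul nx nx'; rewrite mulfV // v_one => h; lia.
Qed.
Lemma piX_neq0 n : pi ^+ n != 0. Proof. by rewrite expf_eq0 (negbTE pi_neq0) andbF. Qed.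
Lemma v_piX n : v (pi ^+ n) = n.
Proof.
elim: n => [|n IH]; first by rewrite expr0 v_one.
rewrite exprS v_mul ?pi_neq0 ?piX_neq0 // v_pi IH; lia.
Qed.

Lemma o_0 : in_o v 0. Proof. by left. Qed.
Lemma o_1 : in_o v 1. Proof. by right; rewrite v_one. Qed.
Lemma o_mul x y : in_o v x -> in_o v y -> in_o v (x * y).
Proof.
case: (eqVneq x 0) => [-> _ _|nx]; first by rewrite mul0r; left.
case: (eqVneq y 0) => [-> _ _|ny]; first by rewrite mulr0; left.
by case=> [/eqP|hx]; [rewrite (negbTE nx)|case=> [/eqP|hy]; [rewrite (negbTE ny)|]] => //;
  right; rewrite v_mul //; lia.
Qed.
Lemma o_opp x : in_o v x -> in_o v (- x).
Proof.
case: (eqVneq x 0) => [-> _|nx]; first by rewrite oppr0; left.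
by case=> [->|hx]; [rewrite oppr0; left| right; rewrite v_opp].
Qed.
Lemma o_add x y : in_o v x -> in_o v y -> in_o v (x + y).
Proof.
case: (eqVneq x 0) => [-> _ //|nx]; first by rewrite add0r.
case: (eqVneq y 0) => [-> hx _|ny]; first by rewrite addr0.
case: (eqVneq (x + y) 0) => [-> _ _|nxy]; first by left.
case=> [/eqP|hx]; first by rewrite (negbTE nx).
case=> [/eqP|hy]; first by rewrite (negbTE ny).
right; apply: le_trans (v_add nx ny nxy); by rewrite le_min hx hy.
Qed.
Lemma o_sub x y : in_o v x -> in_o v y -> in_o v (x - y).
Proof. by move=> hx hy; apply: o_add => //; apply: o_opp. Qed.
Lemma o_piX n : in_o v (pi ^+ n). Proof. by right; rewrite v_piX. Qed.

Definition in_pm (a : K) := exists a', in_o v a' /\ a = pi * a'.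
Definition o_unit (a : K) := a != 0 /\ v a = 0.

Lemma o_pm_or_unit a : in_o v a -> in_pm a \/ o_unit a.
Proof.
have pm0 : in_pm 0 by exists 0; split; [exact: o_0| rewrite mulr0].
case: (eqVneq a 0) => [-> _|na]; first by left.
case=> [/eqP|ha]; first by rewrite (negbTE na).
have [h|h] : v a = 0 \/ 0 < v a by lia.
  by right.
left; exists (a / pi); split; last by field; exact: pi_neq0.
right; rewrite v_mul ?invr_eq0 ?pi_neq0 // v_inv ?pi_neq0 // v_pi; lia.
Qed.

Lemma o_unit_inv a : o_unit a -> in_o v a^-1.
Proof. by case=> na va; right; rewrite v_inv // va. Qed.
Lemma o_unit_o a : o_unit a -> in_o v a.
Proof. by case=> _ va; right; rewrite va. Qed.
Lemma o_unit_opp a : o_unit a -> o_unit (- a).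
Proof. by case=> na va; split; [rewrite oppr_eq0| rewrite v_opp]. Qed.

Lemma not_pm_1 : ~ in_pm 1.
Proof.
case=> a [ha e1]; have na : a != 0.
  by apply/eqP=> a0; move: e1; rewrite a0 mulr0 => /eqP; rewrite oner_eq0.
by have := congr1 v e1; rewrite v_one v_mul ?pi_neq0 // v_pi; case: ha => [/eqP|]; lia.
Qed.
Lemma pm_add a b : in_pm a -> in_pm b -> in_pm (a + b).
Proof.
case=> a' [ha ->] [b' [hb ->]]; exists (a' + b'); split; [exact: o_add| by rewrite mulrDr].
Qed.
Lemma pm_mul a b : in_pm a -> in_o v b -> in_pm (a * b).
Proof. case=> a' [ha ->] hb; exists (a' * b); split; [exact: o_mul| by rewrite mulrA]. Qed.
Lemma pm_opp a : in_pm a -> in_pm (- a).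
Proof. case=> a' [ha ->]; exists (- a'); split; [exact: o_opp| by rewrite mulrN]. Qed.
Lemma pm_pi a : in_o v a -> in_pm (pi * a). Proof. by move=> h; exists a. Qed.

Definition in_piXo (n : nat) (x : K) := exists y, in_o v y /\ x = pi ^+ n * y.

Lemma piXo_add n x y : in_piXo n x -> in_piXo n y -> in_piXo n (x + y).
Proof. case=> a [ha ->] [b [hb ->]]; exists (a + b); split; [exact: o_add| by rewrite mulrDr]. Qed.
Lemma piXo_opp n x : in_piXo n x -> in_piXo n (- x).
Proof. case=> a [ha ->]; exists (- a); split; [exact: o_opp| by rewrite mulrN]. Qed.
Lemma piXo_le m n x : (n <= m)%N -> in_piXo m x -> in_piXo n x.
Proof.
move=> nm [a [ha ->]]; exists (pi ^+ (m - n) * a); split; first by apply: o_mul => //; exact: o_piX.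
by rewrite mulrA -exprD subnKC.
Qed.
Lemma small_piXo (n : nat) x : small v n x <-> in_piXo n x.
Proof.
split.
  case: (eqVneq x 0) => [-> _|nx]; first by exists 0; split; [exact: o_0| rewrite mulr0].
  case=> [/eqP|h]; first by rewrite (negbTE nx).
  exists (x / pi ^+ n); split; last by field; exact: piX_neq0.
  right; rewrite v_mul ?invr_eq0 ?piX_neq0 // v_inv ?piX_neq0 // v_piX; lia.
case=> a [ha ->]; case: (eqVneq a 0) => [->|na]; first by left; rewrite mulr0.
case: ha => [/eqP|ha]; first by rewrite (negbTE na).
right; rewrite v_mul ?piX_neq0 // v_piX; lia.
Qed.

Implicit Types (L A B C : vset K) (w : 'cV[K]_2).

Definition seqv (A B : vset K) := forall w, A w <-> B w.

Lemma seqv_sym A B : seqv A B -> seqv B A.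
Proof. by move=> h w; split=> /h. Qed.
Lemma seqv_trans A B C : seqv A B -> seqv B C -> seqv A C.
Proof. by move=> h1 h2 w; split=> [/h1/h2|/h2/h1]. Qed.

Lemma lat_add L w w' : is_lattice v L -> L w -> L w' -> L (w + w').
Proof.
case=> g [_ hg] /hg [c [hc ->]] /hg [c' [hc' ->]].
apply/hg; exists (c + c'); split; last by rewrite mulmxDr.
by move=> i; rewrite mxE; apply: o_add.
Qed.
Lemma lat_scalar L w k : is_lattice v L -> L w -> in_o v k -> L (k *: w).
Proof.
case=> g [_ hg] /hg [c [hc ->]] hk.
apply/hg; exists (k *: c); split; last by rewrite scalemxAr.
by move=> i; rewrite mxE; apply: o_mul.
Qed.

Lemma lat_seqv L L' : is_lattice v L -> seqv L L' -> is_lattice v L'.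
Proof. by case=> g [ug hg] e; exists g; split => // w; rewrite -e. Qed.
Lemma lat_scale L a : is_lattice v L -> a != 0 -> is_lattice v (scale_set a L).
Proof.
case=> g [ug hg] na; exists (a *: g); split; first by rewrite unitmxZ // unitfE.
move=> w; split.
  by case=> u [/hg [c [hc ->]] ->]; exists c; rewrite scalemxAl.
case=> c [hc ->]; exists (g *m c); split; first by apply/hg; exists c.
by rewrite scalemxAl.
Qed.
Lemma lat_image L h : is_lattice v L -> h \in unitmx -> is_lattice v (mat_image h L).
Proof.
case=> g [ug hg] uh; exists (h *m g); split; first by rewrite unitmx_mul uh ug.
move=> w; split.
  by case=> u [/hg [c [hc ->]] ->]; exists c; rewrite mulmxA.
case=> c [hc ->]; exists (g *m c); split; first by apply/hg; exists c.
by rewrite mulmxA.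
Qed.

Lemma scale_seqv a A B : seqv A B -> seqv (scale_set a A) (scale_set a B).
Proof. by move=> e w; split; case=> u [/e h ->]; exists u. Qed.
Lemma scale_scale a b A : seqv (scale_set a (scale_set b A)) (scale_set (a * b) A).
Proof.
move=> w; split.
  by case=> u [[u' [h ->]] ->]; exists u'; rewrite scalerA.
case=> u [h ->]; exists (b *: u); split; first by exists u.
by rewrite scalerA.
Qed.
Lemma scale_comm a b A : seqv (scale_set a (scale_set b A)) (scale_set b (scale_set a A)).
Proof.
apply: seqv_trans (scale_scale _ _ _) _; rewrite mulrC.
exact: seqv_sym (scale_scale _ _ _).
Qed.
Lemma scale1 A : seqv (scale_set 1 A) A.
Proof.
move=> w; split; first by case=> u [h ->]; rewrite scale1r.
by move=> h; exists w; rewrite scale1r.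
Qed.

Lemma hom_seqv L L' : seqv L L' -> homothetic L L'.
Proof.
move=> e; exists 1; split; first exact: oner_neq0.
exact: seqv_trans (seqv_sym e) (seqv_sym (scale1 L)).
Qed.
Lemma hom_refl L : homothetic L L.
Proof. exact: hom_seqv. Qed.
Lemma hom_scale L a : a != 0 -> homothetic L (scale_set a L).
Proof. by move=> na; exists a. Qed.
Lemma hom_trans A B C : homothetic A B -> homothetic B C -> homothetic A C.
Proof.
case=> a [na ea] [b [nb eb]]; exists (b * a); split; first by rewrite mulf_neq0.
apply: seqv_trans eb _; apply: seqv_trans (scale_seqv b ea) _; exact: scale_scale.
Qed.
Lemma hom_sym A B : homothetic A B -> homothetic B A.
Proof.
case=> a [na ea]; exists a^-1; split; first by rewrite invr_eq0.
apply: seqv_sym; apply: seqv_trans (scale_seqv _ ea) _.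
apply: seqv_trans (scale_scale _ _ _) _; rewrite mulVf //; exact: scale1.
Qed.

Lemma hclass_mem (C : vset K -> Prop) L : is_hclass v C -> C L ->
  forall L', C L' <-> is_lattice v L' /\ homothetic L L'.
Proof.
case=> L0 [l0 hC] /hC [lL h0] L'; split.
  by move/hC => [lL' h']; split => //; apply: hom_trans (hom_sym h0) h'.
by case=> lL' h'; apply/hC; split => //; apply: hom_trans h0 h'.
Qed.

Lemma cls_mem (x : vertex v) L L' : vcls x L ->
  (vcls x L' <-> is_lattice v L' /\ homothetic L L').
Proof. move=> h; exact: hclass_mem (vcls_ok x) h L'. Qed.
Lemma cls_lat (x : vertex v) L : vcls x L -> is_lattice v L.
Proof. by move=> h; have [] := (@cls_mem x L L h).1 h. Qed.
Lemma cls_inhabited (x : vertex v) : exists L, vcls x L.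
Proof.
have [L0 [l0 hC]] := vcls_ok x.
by exists L0; apply/hC; split => //; exact: hom_refl.
Qed.
Lemma cls_seqv (x : vertex v) L L' : vcls x L -> seqv L L' -> vcls x L'.
Proof.
move=> h e; apply/(cls_mem _ h); split; last exact: hom_seqv.
exact: lat_seqv (cls_lat h) e.
Qed.
Lemma cls_scale (x : vertex v) L a : vcls x L -> a != 0 -> vcls x (scale_set a L).
Proof.
move=> h na; apply/(cls_mem _ h); split; last exact: hom_scale.
exact: lat_scale (cls_lat h) na.
Qed.

Lemma vertex_eq (x y : vertex v) L L' : vcls x L -> vcls y L' -> seqv L L' -> x = y.
Proof.
case: x y => [C1 h1] [C2 h2] /= hx hy e.
have E : C1 = C2.
  apply: functional_extensionality => M; apply: propositional_extensionality.
  rewrite (hclass_mem h1 hx) (hclass_mem h2 hy).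
  split; case=> lM hM; split => //.
    exact: hom_trans (hom_sym (hom_seqv e)) hM.
  exact: hom_trans (hom_seqv e) hM.
by subst; f_equal; apply: proof_irrelevance.
Qed.

Lemma strict_seqv A A' B B' : seqv A A' -> seqv B B' ->
  strict_subset A B -> strict_subset A' B'.
Proof.
move=> ea eb [h [w [hB nA]]]; split; first by move=> u /ea /h /eb.
by exists w; split; [apply/eb| move=> /ea].
Qed.
Lemma strict_scale a A B : a != 0 -> strict_subset A B ->
  strict_subset (scale_set a A) (scale_set a B).
Proof.
move=> na [h [w [hB nA]]]; split.
  by move=> u [u' [hu ->]]; exists u'; split => //; apply: h.
exists (a *: w); split; first by exists w.
by case=> u [hu e]; apply: nA; rewrite -[w](scalerK na) e scalerK.
Qed.

Lemma adj_rep (x y : vertex v) L : adj pi x y -> vcls x L ->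
  exists L', [/\ vcls y L', strict_subset (scale_set pi L) L' & strict_subset L' L].
Proof.
case=> M0 [M1 [hM0 [hM1 [s1 s2]]]] hL.
have [_ [a [na ea]]] := (cls_mem _ hM0).1 hL.
exists (scale_set a M1); split; first exact: cls_scale.
  apply: strict_seqv (strict_scale na s1); last by [].
  apply: seqv_trans (scale_comm _ _ _) _; apply: scale_seqv; exact: seqv_sym.
apply: strict_seqv (strict_scale na s2) => //; exact: seqv_sym.
Qed.

Lemma adj_sym (x y : vertex v) : adj pi x y -> adj pi y x.
Proof.
case=> L [L' [hL [hL' [s1 s2]]]].
exists L', (scale_set pi L); split => //; split; first exact: cls_scale hL pi_neq0.
split => //; exact: strict_scale pi_neq0 s2.
Qed.

(** ** Standard lattices and their neighbours

    For a pair of vectors f1, f2, s in o and n : nat, the standard lattice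
    [std_lat f1 f2 s n] is o (f1 + s f2) + pi^n o f2, written in coordinates
    (a, a s + pi^n b) with a, b in o.  The "pinched" lattice
    [pinched_lat f1 f2 s n] is pi o (f1 + s f2) + pi^n o f2. *)

Definition lc (f1 f2 : 'cV[K]_2) (a b : K) := a *: f1 + b *: f2.

Lemma lcD f1 f2 a b c d : lc f1 f2 a b + lc f1 f2 c d = lc f1 f2 (a + c) (b + d).
Proof. by rewrite /lc !scalerDl addrACA. Qed.
Lemma lcZ f1 f2 k a b : k *: lc f1 f2 a b = lc f1 f2 (k * a) (k * b).
Proof. by rewrite /lc scalerDr !scalerA. Qed.
Lemma lc_congr f1 f2 a b c d : a = c -> b = d -> lc f1 f2 a b = lc f1 f2 c d.
Proof. by move=> -> ->. Qed.
Lemma lc_swap f1 f2 a b : lc f1 f2 a b = lc f2 f1 b a.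
Proof. by rewrite /lc addrC. Qed.

Definition std_lat f1 f2 s n : vset K := fun w =>
  exists a b, [/\ in_o v a, in_o v b & w = lc f1 f2 a (a * s + pi ^+ n * b)].
Definition pinched_lat f1 f2 s n : vset K := fun w =>
  exists a b, [/\ in_o v a, in_o v b & w = lc f1 f2 (pi * a) (pi * a * s + pi ^+ n * b)].

Lemma std_lat_shift f1 f2 s n t : in_o v t ->
  seqv (std_lat f1 f2 (s + pi ^+ n * t) n) (std_lat f1 f2 s n).
Proof.
move=> ht w; split; case=> a [b [ha hb ->]].
  exists a, (a * t + b); split => //; [apply: o_add => //; exact: o_mul| apply: lc_congr; ring].
exists a, (b - a * t); split => //; [apply: o_sub => //; exact: o_mul| apply: lc_congr; ring].
Qed.
Lemma pinched_pi f1 f2 s n :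
  seqv (pinched_lat f1 f2 s n.+1) (scale_set pi (std_lat f1 f2 s n)).
Proof.
move=> w; split.
  case=> a [b [ha hb ->]]; exists (lc f1 f2 a (a * s + pi ^+ n * b)); split.
    by exists a, b.
  by rewrite lcZ exprS; apply: lc_congr; ring.
case=> u [[a [b [ha hb ->]]] ->]; exists a, b; split => //.
by rewrite lcZ exprS; apply: lc_congr; ring.
Qed.
Lemma pinched00 f1 f2 : seqv (pinched_lat f1 f2 0 0) (std_lat f2 f1 0 1).
Proof.
move=> w; split; case=> a [b [ha hb ->]]; exists b, a; split => //;
  rewrite lc_swap; apply: lc_congr; ring.
Qed.
Lemma std_lat00 f1 f2 : seqv (std_lat f1 f2 0 0) (std_lat f2 f1 0 0).
Proof.
move=> w; split; case=> a [b [ha hb ->]]; exists b, a; split => //;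
  rewrite lc_swap; apply: lc_congr; ring.
Qed.

Section Neighbours.
Variables (f1 f2 : 'cV[K]_2) (s : K) (n : nat) (L : vset K).
Hypothesis lL : is_lattice v L.
Let Lambda := std_lat f1 f2 s n.
Hypothesis Hpi : forall w, scale_set pi Lambda w -> L w.
Hypothesis Hsub : forall w, L w -> Lambda w.
Hypothesis not_full : ~ (forall w, Lambda w -> L w).

Lemma std_lat_generated t : in_o v t ->
  L (lc f1 f2 1 (s + pi ^+ n * t)) -> L (lc f1 f2 0 (pi ^+ n)) -> forall w, Lambda w -> L w.
Proof.
move=> ht hu hz w [a [b [ha hb ->]]].
have -> : lc f1 f2 a (a * s + pi ^+ n * b) =
   a *: lc f1 f2 1 (s + pi ^+ n * t) + (b - a * t) *: lc f1 f2 0 (pi ^+ n).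
  by rewrite !lcZ lcD; apply: lc_congr; ring.
apply: lat_add => //; apply: lat_scalar => //; apply: o_sub => //; exact: o_mul.
Qed.

Lemma pi_std_mem a b : in_o v a -> in_o v b ->
  L (lc f1 f2 (pi * a) (pi * a * s + pi ^+ n.+1 * b)).
Proof. by move=> ha hb; apply/Hpi/pinched_pi; exists a, b. Qed.

Lemma neighbour_refine t : in_o v t -> L (lc f1 f2 1 (s + pi ^+ n * t)) ->
  seqv L (std_lat f1 f2 (s + pi ^+ n * t) n.+1).
Proof.
move=> ht hu w; split.
  move=> Lw; have [al [be [hal hbe ew]]] := Hsub Lw.
  have hg : in_o v (be - al * t) by apply: o_sub => //; apply: o_mul.
  case: (o_pm_or_unit hg) => [[g' [hg' eg]] | ug].
    exists al, g'; split => //; rewrite ew; apply: lc_congr => //.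
    have -> : be = pi * g' + al * t by rewrite -eg; ring.
    rewrite exprS; ring.
  have ng : be - al * t != 0 by case: ug.
  case: not_full; apply: (std_lat_generated ht) => //.
  have -> : lc f1 f2 0 (pi ^+ n) =
     (be - al * t)^-1 *: (w + (- al) *: lc f1 f2 1 (s + pi ^+ n * t)).
    rewrite ew !lcZ lcD !lcZ; apply: lc_congr; first by rewrite mulr1 subrr mulr0.
    have -> : al * s + pi ^+ n * be + - al * (s + pi ^+ n * t) = (be - al * t) * pi ^+ n by ring.
    by rewrite mulKf.
  apply: lat_scalar => //; last exact: o_unit_inv.
  by apply: lat_add => //; apply: lat_scalar => //; exact: o_opp.
case=> al [be [hal hbe ->]].
have -> : lc f1 f2 al (al * (s + pi ^+ n * t) + pi ^+ n.+1 * be) =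
   al *: lc f1 f2 1 (s + pi ^+ n * t) + lc f1 f2 (pi * 0) (pi * 0 * s + pi ^+ n.+1 * be).
  by rewrite lcZ lcD; apply: lc_congr; ring.
by apply: lat_add => //; [exact: lat_scalar| apply: pi_std_mem => //; exact: o_0].
Qed.

Lemma neighbour_pinched : L (lc f1 f2 0 (pi ^+ n)) -> seqv L (pinched_lat f1 f2 s n).
Proof.
move=> hz w; split.
  move=> Lw; have [al [be [hal hbe ew]]] := Hsub Lw.
  case: (o_pm_or_unit hal) => [[al' [hal' eal]] | ual].
    by exists al', be; split => //; rewrite ew eal; apply: lc_congr; ring.
  have ial := o_unit_inv ual; have nal : al != 0 by case: ual.
  case: not_full; apply: (@std_lat_generated (be / al)) => //; first exact: o_mul.
  have -> : lc f1 f2 1 (s + pi ^+ n * (be / al)) = al^-1 *: w.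
    by rewrite ew lcZ; apply: lc_congr; field.
  exact: lat_scalar.
case=> al [be [hal hbe ->]].
have -> : lc f1 f2 (pi * al) (pi * al * s + pi ^+ n * be) =
   lc f1 f2 (pi * al) (pi * al * s + pi ^+ n.+1 * 0) + be *: lc f1 f2 0 (pi ^+ n).
  by rewrite lcZ lcD; apply: lc_congr; ring.
by apply: lat_add => //; [apply: pi_std_mem => //; exact: o_0| exact: lat_scalar].
Qed.
End Neighbours.

Lemma std_lat_neighbour f1 f2 s n L : is_lattice v L ->
  strict_subset (scale_set pi (std_lat f1 f2 s n)) L -> strict_subset L (std_lat f1 f2 s n) ->
  (exists t, in_o v t /\ seqv L (std_lat f1 f2 (s + pi ^+ n * t) n.+1))
  \/ seqv L (pinched_lat f1 f2 s n).
Proof.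
move=> lL [Hpi [w0 [Lw0 nw0]]] [Hsub [w1 [Lamw1 nLw1]]].
have not_full : ~ (forall w, std_lat f1 f2 s n w -> L w) by move/(_ _ Lamw1).
have [a [b [ha hb e0]]] := Hsub _ Lw0.
case: (o_pm_or_unit ha) => [[a' [ha' ea]] | ua].
  case: (o_pm_or_unit hb) => [[b' [hb' eb]]|ub].
    case: nw0; exists (lc f1 f2 a' (a' * s + pi ^+ n * b')); split; first by exists a', b'.
    by rewrite e0 ea eb lcZ; apply: lc_congr; ring.
  right; apply: neighbour_pinched => //.
  have nb : b != 0 by case: ub.
  have -> : lc f1 f2 0 (pi ^+ n) =
     b^-1 *: (w0 + (-1) *: lc f1 f2 (pi * a') (pi * a' * s + pi ^+ n.+1 * 0)).
    by rewrite e0 ea !lcZ lcD !lcZ; apply: lc_congr; field.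
  apply: lat_scalar => //; last exact: o_unit_inv.
  apply: lat_add => //; apply: lat_scalar; [done| |exact/o_opp/o_1].
  by apply: pi_std_mem => //; exact: o_0.
have na : a != 0 by case: ua.
have ht : in_o v (b / a) by apply: o_mul => //; exact: o_unit_inv.
left; exists (b / a); split => //; apply: neighbour_refine => //.
have -> : lc f1 f2 1 (s + pi ^+ n * (b / a)) = a^-1 *: w0.
  by rewrite e0 lcZ; apply: lc_congr; field.
by apply: lat_scalar => //; exact: o_unit_inv.
Qed.

(** ** Geodesic rays

    Along a ray r_0, r_1, ... without backtracking starting at [std_lat f1 f2 s 0],
    the successive neighbours refine s modulo pi^(n+1); completeness of K
    provides a limit l with r_n = [std_lat f1 f2 l n] for all n. *)

Section Ray.
Hypothesis hc : valuation_complete v.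
Variable r : nat -> vertex v.
Hypothesis r_adj : forall n, adj pi (r n) (r n.+1).
Hypothesis r_nobacktrack : forall n, r n.+2 <> r n.
Variables f1 f2 : 'cV[K]_2.

Definition ray_approx n s :=
  [/\ in_o v s, vcls (r n.+1) (std_lat f1 f2 s n.+1) & vcls (r n) (std_lat f1 f2 s n)].

Lemma ray_approx_next n s : ray_approx n s ->
  exists t, in_o v t /\ ray_approx n.+1 (s + pi ^+ n.+1 * t).
Proof.
case=> hs h1 h0.
have [L' [hL' st1 st2]] := adj_rep (r_adj n.+1) h1.
case: (std_lat_neighbour (cls_lat hL') st1 st2) => [[t [ht e]] | e].
  exists t; split => //; split.
  - by apply: o_add => //; apply: o_mul => //; exact: o_piX.
  - exact: cls_seqv hL' e.
  - by apply: cls_seqv h1 _; apply: seqv_sym; apply: std_lat_shift.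
case: (@r_nobacktrack n); apply: vertex_eq hL' (cls_scale h0 pi_neq0) _.
exact: seqv_trans e (pinched_pi _ _ _ _).
Qed.

Variable s0 : K.
Hypothesis approx0 : ray_approx 0 s0.

Definition ray_corr n s := epsilon (inhabits (0 : K))
  (fun t => in_o v t /\ ray_approx n.+1 (s + pi ^+ n.+1 * t)).
Fixpoint ray_seq k :=
  if k is k'.+1 then ray_seq k' + pi ^+ k'.+1 * ray_corr k' (ray_seq k') else s0.

Lemma ray_seqP k : ray_approx k (ray_seq k) /\ in_o v (ray_corr k (ray_seq k)).
Proof.
have corrP m s : ray_approx m s ->
    in_o v (ray_corr m s) /\ ray_approx m.+1 (s + pi ^+ m.+1 * ray_corr m s).
  by move=> h; exact: epsilon_spec (inhabits (0 : K)) _ (ray_approx_next h).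
elim: k => [|k [IH _]]; first by split => //; case: (corrP 0%N s0 approx0).
by have [_ h] := corrP k _ IH; split => //; case: (corrP k.+1 _ h).
Qed.

Lemma ray_seq_diff k m : (k <= m)%N -> in_piXo k.+1 (ray_seq m - ray_seq k).
Proof.
have piXo0 j : in_piXo j 0 by exists 0; split; [exact: o_0| rewrite mulr0].
elim: m => [|m IH] hkm; first by rewrite (_ : k = 0%N) ?subrr //; lia.
case: (eqVneq k m.+1) => [->|nk]; first by rewrite subrr.
have -> : ray_seq m.+1 - ray_seq k = pi ^+ m.+1 * ray_corr m (ray_seq m) + (ray_seq m - ray_seq k).
  by rewrite /=; ring.
apply: piXo_add; last by apply: IH; lia.
apply: (@piXo_le m.+1); first lia.
by exists (ray_corr m (ray_seq m)); split => //; exact: (ray_seqP m).2.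
Qed.

Lemma ray_limit : exists l, in_o v l /\ forall n, vcls (r n) (std_lat f1 f2 l n).
Proof.
have cauchy : forall N : int, exists M : nat, forall m n : nat,
    (M <= m)%N -> (M <= n)%N -> small v N (ray_seq m - ray_seq n).
  move=> N; exists `|N|%N => m n hm hn.
  have : small v `|N|%N (ray_seq m - ray_seq n).
    apply/small_piXo; apply: (@piXo_le (`|N|%N).+1) => //.
    have -> : ray_seq m - ray_seq n = (ray_seq m - ray_seq `|N|%N) - (ray_seq n - ray_seq `|N|%N).
      by ring.
    by apply: piXo_add; [exact: ray_seq_diff| apply: piXo_opp; exact: ray_seq_diff].
  by case=> [->|h]; [left| right; apply: le_trans h; lia].
have [l hl] := hc cauchy.
have near k : in_piXo k.+1 (ray_seq k - l).
  have [M hM] := hl (Posz k.+1).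
  have h1 : in_piXo k.+1 (ray_seq (maxn M k) - l) by apply/small_piXo/hM/leq_maxl.
  have -> : ray_seq k - l = (ray_seq (maxn M k) - l) - (ray_seq (maxn M k) - ray_seq k) by ring.
  by apply: piXo_add => //; apply: piXo_opp; apply: ray_seq_diff; exact: leq_maxr.
have std_near k m : (m <= k.+1)%N ->
    seqv (std_lat f1 f2 (ray_seq k) m) (std_lat f1 f2 l m).
  move=> hm; have [y [hy ey]] := piXo_le hm (near k).
  have -> : l = ray_seq k + pi ^+ m * (- y) by rewrite mulrN -ey; ring.
  by apply: seqv_sym; apply: std_lat_shift; exact: o_opp.
have [y0 [hy0 ey0]] := near 0%N.
exists l; split => [|[|k]].
- have [[hs0 _ _] _] := ray_seqP 0.
  have -> : l = ray_seq 0 - pi ^+ 1 * y0 by rewrite -ey0; ring.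
  by apply: o_sub => //; apply: o_mul => //; exact: o_piX.
- have [[_ _ h0] _] := ray_seqP 0; exact: cls_seqv h0 (std_near 0%N 0%N isT).
- have [[_ h1 _] _] := ray_seqP k; exact: cls_seqv h1 (std_near k k.+1 (leqnn _)).
Qed.
End Ray.

Definition ray_lat f1 f2 c n : vset K := fun w => exists a b1 b2,
  [/\ in_o v a, in_o v b1, in_o v b2 & w = a *: c + pi ^+ n *: lc f1 f2 b1 b2].

Lemma std_ray_lat f1 f2 l n : in_o v l ->
  seqv (std_lat f1 f2 l n) (ray_lat f1 f2 (lc f1 f2 1 l) n).
Proof.
move=> hl w; split.
  case=> a [b [ha hb ->]]; exists a, 0, b; split => //; first exact: o_0.
  by rewrite !lcZ lcD; apply: lc_congr; ring.
case=> a [b1 [b2 [ha hb1 hb2 ->]]].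
exists (a + pi ^+ n * b1), (b2 - b1 * l); split.
- by apply: o_add => //; apply: o_mul => //; exact: o_piX.
- by apply: o_sub => //; apply: o_mul.
- by rewrite !lcZ lcD; apply: lc_congr; ring.
Qed.
Lemma ray_lat_swap f1 f2 c n : seqv (ray_lat f1 f2 c n) (ray_lat f2 f1 c n).
Proof.
move=> w; split; case=> a [b1 [b2 [ha hb1 hb2 ->]]]; exists a, b2, b1; split => //;
  by rewrite lc_swap.
Qed.

Lemma ray_direction (hc : valuation_complete v) (r : nat -> vertex v)
  (r_adj : forall n, adj pi (r n) (r n.+1)) (r_nobacktrack : forall n, r n.+2 <> r n) f1 f2 :
  vcls (r 0) (std_lat f1 f2 0 0) ->
  exists c1 c2, [/\ in_o v c1, in_o v c2, c1 = 1 \/ c2 = 1 &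
    forall n, vcls (r n) (ray_lat f1 f2 (lc f1 f2 c1 c2) n)].
Proof.
move=> h0; have [L' [hL' st1 st2]] := adj_rep (r_adj 0) h0.
case: (std_lat_neighbour (cls_lat hL') st1 st2) => [[t [ht e]] | e].
  rewrite expr0 mul1r add0r in e.
  have approx : ray_approx r f1 f2 0 t.
    split => //; first exact: cls_seqv hL' e.
    apply: cls_seqv h0 _; apply: seqv_sym.
    by rewrite -[t]mul1r -(expr0 pi) -[_ * t]add0r; exact: std_lat_shift.
  have [l [hl hn]] := ray_limit hc r_adj r_nobacktrack approx.
  exists 1, l; split => //; [exact: o_1| by left| move=> n].
  exact: cls_seqv (hn n) (std_ray_lat _ _ _ hl).
have approx : ray_approx r f2 f1 0 0.
  split; [exact: o_0| exact: cls_seqv hL' (seqv_trans e (pinched00 _ _))|].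
  exact: cls_seqv h0 (std_lat00 _ _).
have [l [hl hn]] := ray_limit hc r_adj r_nobacktrack approx.
exists l, 1; split => //; [exact: o_1| by right| move=> n].
apply: cls_seqv (hn n) _; apply: seqv_trans (std_ray_lat _ _ _ hl) _.
by rewrite lc_swap; apply: ray_lat_swap.
Qed.

(** ** Two opposite rays span a basis

    If the rays in directions c and d from [o f1 + o f2] leave through
    different neighbours, then c, d is an o-basis of o f1 + o f2. *)

Lemma ray_lat1_unit f1 f2 c1 c2 a u1 u2 : o_unit a -> in_o v u1 -> in_o v u2 ->
  seqv (ray_lat f1 f2 (lc f1 f2 c1 c2) 1)
       (ray_lat f1 f2 (lc f1 f2 (a * c1 + pi * u1) (a * c2 + pi * u2)) 1).
Proof.
move=> ua hu1 hu2; have na : a != 0 by case: ua.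
have ia := o_unit_inv ua.
move=> w; split; case=> al [b1 [b2 [hal hb1 hb2 ->]]].
  exists (al / a), (b1 - al / a * u1), (b2 - al / a * u2); split.
  - exact: o_mul.
  - by apply: o_sub => //; apply: o_mul => //; apply: o_mul.
  - by apply: o_sub => //; apply: o_mul => //; apply: o_mul.
  - by rewrite expr1 !lcZ !lcD; apply: lc_congr; field.
exists (al * a), (al * u1 + b1), (al * u2 + b2); split.
- by apply: o_mul => //; exact: o_unit_o.
- by apply: o_add => //; apply: o_mul.
- by apply: o_add => //; apply: o_mul.
- by rewrite expr1 !lcZ !lcD; apply: lc_congr; ring.
Qed.

Lemma det_unit f1 f2 c1 c2 d1 d2 : in_o v c1 -> in_o v c2 -> in_o v d1 -> in_o v d2 ->
  (c1 = 1 \/ c2 = 1) -> (d1 = 1 \/ d2 = 1) ->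
  ~ seqv (ray_lat f1 f2 (lc f1 f2 c1 c2) 1) (ray_lat f1 f2 (lc f1 f2 d1 d2) 1) ->
  o_unit (c1 * d2 - c2 * d1).
Proof.
move=> hc1 hc2 hd1 hd2 hc hd distinct.
have hD : in_o v (c1 * d2 - c2 * d1) by apply: o_sub; apply: o_mul.
case: (o_pm_or_unit hD) => [[de [hde ede]] | //].
have not_both : ~ (in_pm d1 /\ in_pm d2) by case: hd => -> [] *; exact: not_pm_1.
case: distinct; case: hc => ec; rewrite ec in ede *.
  have ud1 : o_unit d1.
    case: (o_pm_or_unit hd1) => [p1|//]; case: not_both; split => //.
    have -> : d2 = d1 * c2 + pi * de by rewrite -ede; ring.
    by apply: pm_add; [apply: pm_mul| apply: pm_pi].
  have -> : lc f1 f2 d1 d2 = lc f1 f2 (d1 * 1 + pi * 0) (d1 * c2 + pi * de).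
    by apply: lc_congr; [ring| rewrite -ede; ring].
  by apply: ray_lat1_unit => //; exact: o_0.
have ud2 : o_unit d2.
  case: (o_pm_or_unit hd2) => [p2|//]; case: not_both; split => //.
  have -> : d1 = d2 * c1 - pi * de by rewrite -ede; ring.
  by apply: pm_add; [apply: pm_mul| apply: pm_opp; apply: pm_pi].
have -> : lc f1 f2 d1 d2 = lc f1 f2 (d2 * c1 + pi * (- de)) (d2 * 1 + pi * 0).
  by apply: lc_congr; [rewrite mulrN -ede; ring| ring].
by apply: ray_lat1_unit => //; [exact: o_opp| exact: o_0].
Qed.

Lemma cramer_o c1 c2 d1 d2 b1 b2 : in_o v c1 -> in_o v c2 -> in_o v d1 -> in_o v d2 ->
  o_unit (c1 * d2 - c2 * d1) -> in_o v b1 -> in_o v b2 ->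
  exists al be, [/\ in_o v al, in_o v be, al * c1 + be * d1 = b1 & al * c2 + be * d2 = b2].
Proof.
move=> hc1 hc2 hd1 hd2 uD hb1 hb2.
set D := c1 * d2 - c2 * d1 in uD.
have nD : D != 0 by case: uD.
have iD := o_unit_inv uD.
exists ((d2 * b1 - d1 * b2) / D), ((c1 * b2 - c2 * b1) / D); split.
- by apply: o_mul => //; apply: o_sub; apply: o_mul.
- by apply: o_mul => //; apply: o_sub; apply: o_mul.
- by rewrite /D; field.
- by rewrite /D; field.
Qed.

(** ** Explicit 2x2 matrices and the standard apartment *)

Definition col2 (x y : K) : 'cV[K]_2 := \col_(i < 2) (if val i == 0%N then x else y).
Definition mx22 (a b c d : K) : 'M[K]_2 := \matrix_(i < 2, j < 2)
  (if val i == 0%N then (if val j == 0%N then a else b) else (if val j == 0%N then c else d)).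

Lemma mx22_col2 a b c d x y : mx22 a b c d *m col2 x y = col2 (a * x + b * y) (c * x + d * y).
Proof.
apply/colP => i; rewrite !mxE !big_ord_recr big_ord0 /= !mxE /= add0r.
by case: i => [[|[|]]].
Qed.
Lemma mx22_mul a b c d a' b' c' d' : mx22 a b c d *m mx22 a' b' c' d' =
  mx22 (a * a' + b * c') (a * b' + b * d') (c * a' + d * c') (c * b' + d * d').
Proof.
apply/matrixP => i j; rewrite !mxE !big_ord_recr big_ord0 /= !mxE /= add0r.
by case: i => [[|[|]]] //; case: j => [[|[|]]].
Qed.
Lemma mx22_unit a b c d : a * d - b * c != 0 -> mx22 a b c d \in unitmx.
Proof.
move=> nD; have idmx : (1%:M : 'M[K]_2) = mx22 1 0 0 1.
  by apply/matrixP => i j; rewrite !mxE; case: i => [[|[|]]] //; case: j => [[|[|]]].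
have h : mx22 a b c d *m mx22 (d / (a * d - b * c)) (- b / (a * d - b * c))
   (- c / (a * d - b * c)) (a / (a * d - b * c)) = 1%:M.
  by rewrite mx22_mul idmx; congr mx22; field.
by case: (mulmx1_unit h).
Qed.
Lemma col2Z k a b : k *: col2 a b = col2 (k * a) (k * b).
Proof. by apply/colP => i; rewrite !mxE; case: (val i == 0%N). Qed.
Lemma col2_entries (c : 'cV[K]_2) : c = col2 (c 0 0) (c 1 0).
Proof.
by apply/colP => i; rewrite !mxE; case: i => [[|[|]]] //= ?; congr (c _ _); apply: val_inj.
Qed.
Lemma mx_col2 (G : 'M[K]_2) a b : G *m col2 a b = lc (G *m col2 1 0) (G *m col2 0 1) a b.
Proof.
have -> : col2 a b = lc (col2 1 0) (col2 0 1) a b.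
  by apply/colP => i; rewrite !mxE; case: (val i == 0%N) => /=; ring.
by rewrite /lc mulmxDr !scalemxAr.
Qed.

Lemma basis_std_lat (G : 'M[K]_2) L :
  (forall w, L w <-> exists c : 'cV[K]_2, (forall i, in_o v (c i 0)) /\ w = G *m c) ->
  seqv L (std_lat (G *m col2 1 0) (G *m col2 0 1) 0 0).
Proof.
move=> hG w; split.
  move/hG => [c [hc ->]]; exists (c 0 0), (c 1 0); split => //.
  by rewrite {1}(col2_entries c) [G *m col2 _ (c 1 0)]mx_col2; apply: lc_congr; ring.
case=> a [b [ha hb ->]]; apply/hG; exists (col2 a b); split.
  by move=> i; rewrite mxE; case: (val i == 0%N).
by rewrite [G *m col2 a b]mx_col2; apply: lc_congr; ring.
Qed.

Definition apt_pos k : vset K :=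
  fun u => exists a b, [/\ in_o v a, in_o v b & u = col2 a (pi ^+ k * b)].
Definition apt_neg k : vset K :=
  fun u => exists a b, [/\ in_o v a, in_o v b & u = col2 (pi ^+ k * a) b].

Definition Dmx := mx22 1 0 0 pi.
Definition Jmx := mx22 0 1 1 0.

Lemma Dmx_unit : Dmx \in unitmx.
Proof. by apply: mx22_unit; rewrite mulr0 subr0 mul1r pi_neq0. Qed.
Lemma Jmx_unit : Jmx \in unitmx.
Proof. by apply: mx22_unit; rewrite mul0r mulr1 sub0r oppr_eq0 oner_neq0. Qed.

Lemma Dmx_pos k : seqv (mat_image Dmx (apt_pos k)) (apt_pos k.+1).
Proof.
move=> w; split.
  case=> u [[a [b [ha hb ->]]] ->]; exists a, b; split => //.
  by rewrite mx22_col2 exprS; congr col2; ring.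
case=> a [b [ha hb ->]]; exists (col2 a (pi ^+ k * b)); split; first by exists a, b.
by rewrite mx22_col2 exprS; congr col2; ring.
Qed.
Lemma Dmx_neg k : seqv (mat_image Dmx (apt_neg k.+1)) (scale_set pi (apt_neg k)).
Proof.
move=> w; split; case=> u [[a [b [ha hb ->]]] ->].
  exists (col2 (pi ^+ k * a) b); split; first by exists a, b.
  by rewrite mx22_col2 col2Z exprS; congr col2; ring.
exists (col2 (pi ^+ k.+1 * a) b); split; first by exists a, b.
by rewrite mx22_col2 col2Z exprS; congr col2; ring.
Qed.
Lemma Jmx_pos k : seqv (mat_image Jmx (apt_pos k)) (apt_neg k).
Proof.
move=> w; split.
  case=> u [[a [b [ha hb ->]]] ->]; exists b, a; split => //.
  by rewrite mx22_col2; congr col2; ring.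
case=> a [b [ha hb ->]]; exists (col2 b (pi ^+ k * a)); split; first by exists b, a.
by rewrite mx22_col2; congr col2; ring.
Qed.
Lemma Jmx_neg k : seqv (mat_image Jmx (apt_neg k)) (apt_pos k).
Proof.
move=> w; split.
  case=> u [[a [b [ha hb ->]]] ->]; exists b, a; split => //.
  by rewrite mx22_col2; congr col2; ring.
case=> a [b [ha hb ->]]; exists (col2 (pi ^+ k * b) a); split; first by exists b, a.
by rewrite mx22_col2; congr col2; ring.
Qed.

(* the frame P = G [c d] maps the standard apartment onto the two rays in
   directions c = c1 f1 + c2 f2 and d = d1 f1 + d2 f2, where f_i = G e_i *)
Section Frame.
Variable G : 'M[K]_2.
Variables c1 c2 d1 d2 : K.
Hypotheses (hc1 : in_o v c1) (hc2 : in_o v c2) (hd1 : in_o v d1) (hd2 : in_o v d2).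
Hypothesis uD : o_unit (c1 * d2 - c2 * d1).
Let f1 := G *m col2 1 0.
Let f2 := G *m col2 0 1.
Definition frame_mx := G *m mx22 c1 d1 c2 d2.

Lemma frame_col2 a b : frame_mx *m col2 a b = lc f1 f2 (c1 * a + d1 * b) (c2 * a + d2 * b).
Proof. by rewrite /frame_mx -mulmxA mx22_col2 mx_col2. Qed.

Lemma frame_pos k : seqv (mat_image frame_mx (apt_pos k)) (ray_lat f1 f2 (lc f1 f2 c1 c2) k).
Proof.
move=> w; split.
  case=> u [[a [b [ha hb ->]]] ->]; exists a, (b * d1), (b * d2); split => //; try exact: o_mul.
  by rewrite frame_col2 !lcZ lcD; apply: lc_congr; ring.
case=> a [be1 [be2 [ha hb1 hb2 ->]]].
have [al [be [hal hbe e1 e2]]] := cramer_o hc1 hc2 hd1 hd2 uD hb1 hb2.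
exists (col2 (a + pi ^+ k * al) (pi ^+ k * be)); split.
  exists (a + pi ^+ k * al), be; split => //; apply: o_add => //; apply: o_mul => //; exact: o_piX.
by rewrite frame_col2 !lcZ lcD -e1 -e2; apply: lc_congr; ring.
Qed.

Lemma frame_neg k : seqv (mat_image frame_mx (apt_neg k)) (ray_lat f1 f2 (lc f1 f2 d1 d2) k).
Proof.
move=> w; split.
  case=> u [[a [b [ha hb ->]]] ->]; exists b, (a * c1), (a * c2); split => //; try exact: o_mul.
  by rewrite frame_col2 !lcZ lcD; apply: lc_congr; ring.
case=> a [be1 [be2 [ha hb1 hb2 ->]]].
have uD' : o_unit (d1 * c2 - d2 * c1).
  by rewrite (_ : _ - _ = - (c1 * d2 - c2 * d1)); [exact: o_unit_opp| ring].
have [al [be [hal hbe e1 e2]]] := cramer_o hd1 hd2 hc1 hc2 uD' hb1 hb2.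
exists (col2 (pi ^+ k * be) (a + pi ^+ k * al)); split.
  exists be, (a + pi ^+ k * al); split => //; apply: o_add => //; apply: o_mul => //; exact: o_piX.
by rewrite frame_col2 !lcZ lcD -e1 -e2; apply: lc_congr; ring.
Qed.

Lemma frame_unit : G \in unitmx -> frame_mx \in unitmx.
Proof.
move=> uG; rewrite /frame_mx unitmx_mul uG /=; apply: mx22_unit.
by rewrite (_ : _ - _ = c1 * d2 - c2 * d1); [case: uD| ring].
Qed.
End Frame.

(** ** The action of GL_2(K) on vertices *)

Lemma img_seqv h A B : seqv A B -> seqv (mat_image h A) (mat_image h B).
Proof. by move=> e w; split; case=> u [/e hu ->]; exists u. Qed.
Lemma img_scale h a A : seqv (mat_image h (scale_set a A)) (scale_set a (mat_image h A)).
Proof.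
move=> w; split; case=> u [[u' [hu ->]] ->].
  by exists (h *m u'); split; [exists u'| rewrite scalemxAr].
by exists (a *: u'); split; [exists u'| rewrite scalemxAr].
Qed.
Lemma img_comp h h' A : seqv (mat_image h (mat_image h' A)) (mat_image (h *m h') A).
Proof.
move=> w; split; first by case=> u [[u' [hu ->]] ->]; exists u'; rewrite mulmxA.
by case=> u [hu ->]; exists (h' *m u); split; [exists u| rewrite mulmxA].
Qed.
Lemma img_id A : seqv (mat_image 1%:M A) A.
Proof.
move=> w; split; first by case=> u [hu ->]; rewrite mul1mx.
by move=> h; exists w; rewrite mul1mx.
Qed.
Lemma hom_image h A B : homothetic A B -> homothetic (mat_image h A) (mat_image h B).
Proof.
case=> a [na e]; exists a; split => //.
apply: seqv_trans (img_seqv h e) _; exact: img_scale.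
Qed.

Section Action.
Variable h : 'M[K]_2.
Hypothesis h_unit : h \in unitmx.

Definition act_cls (x : vertex v) : vset K -> Prop := fun L' =>
  is_lattice v L' /\ exists L, vcls x L /\ homothetic (mat_image h L) L'.

Lemma act_cls_ok x : is_hclass v (act_cls x).
Proof.
have [L0 x0] := cls_inhabited x.
exists (mat_image h L0); split; first exact: lat_image (cls_lat x0) h_unit.
move=> L'; split; last by case=> lL' hh; split => //; exists L0.
case=> lL' [L [hL hh]]; split => //.
have [_ h0] := (@cls_mem x L0 L x0).1 hL.
exact: hom_trans (hom_image h h0) hh.
Qed.

Definition act x := Vertex (act_cls_ok x).

Lemma act_mem x L : vcls x L -> vcls (act x) (mat_image h L).
Proof.
move=> hL; split; first by apply: lat_image => //; exact: cls_lat hL.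
by exists L; split => //; exact: hom_refl.
Qed.

Lemma strict_img A B : strict_subset A B -> strict_subset (mat_image h A) (mat_image h B).
Proof.
case=> s [w [hB nA]]; split.
  by move=> u [u' [hu' ->]]; exists u'; split => //; apply: s.
exists (h *m w); split; first by exists w.
by case=> u [hu' e]; apply: nA; rewrite -(mulKmx h_unit w) e mulKmx.
Qed.

Lemma act_adj x y : adj pi x y -> adj pi (act x) (act y).
Proof.
case=> L [L' [hL [hL' [s1 s2]]]].
exists (mat_image h L), (mat_image h L'); do 2 (split; first exact: act_mem).
split; last exact: strict_img.
apply: strict_seqv (strict_img s1) => //; exact: img_scale.
Qed.

Lemma act_dist x y n : dist_le pi x y n -> dist_le pi (act x) (act y) n.
Proof.
case=> m hm hw; exists m => //; elim: hw {hm} => [z|k z1 z2 z3 ha _ IH]; first exact: walk0.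
by apply: walkS IH; exact: act_adj.
Qed.
End Action.

Lemma act_invK (h : 'M[K]_2) (hu : h \in unitmx) (hu' : invmx h \in unitmx) :
  cancel (act hu) (act hu') /\ cancel (act hu') (act hu).
Proof.
split=> y; have [L0 y0] := cls_inhabited y.
  apply: vertex_eq (act_mem hu' (act_mem hu y0)) y0 _.
  by apply: seqv_trans (img_comp _ _ _) _; rewrite mulVmx //; exact: img_id.
apply: vertex_eq (act_mem hu (act_mem hu' y0)) y0 _.
by apply: seqv_trans (img_comp _ _ _) _; rewrite mulmxV //; exact: img_id.
Qed.

Lemma act_Ghat (h : 'M[K]_2) (hu : h \in unitmx) e : Ghat pi e (act hu).
Proof.
have hu' : invmx h \in unitmx by rewrite unitmx_inv.
have [K1 K2] := act_invK hu hu'.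
split; last by move=> x1 x2 _; exists h => // y _ L; exact: act_mem.
split; first by exists (act hu').
move=> x y n; split; first exact: act_dist.
by move=> /(act_dist hu'); rewrite !K1.
Qed.

Lemma act_conj (P Q : 'M[K]_2) (uP : P \in unitmx) (uC : P *m Q *m invmx P \in unitmx)
    (y z : vertex v) A B :
  vcls y (mat_image P A) -> vcls z (mat_image P B) -> seqv (mat_image Q A) B -> act uC y = z.
Proof.
move=> hy hz e; apply: vertex_eq (act_mem uC hy) hz _.
apply: seqv_trans (img_comp _ _ _) _.
rewrite -mulmxA mulVmx // mulmx1; apply: seqv_trans (seqv_sym (img_comp _ _ _)) _.
exact: img_seqv.
Qed.

(** ** Doubly infinite paths are apartments *)

Lemma dinf_path_frame (hc : valuation_complete v) (x : int -> vertex v) :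
  dinf_path pi x -> exists2 P : 'M[K]_2, P \in unitmx & forall k : nat,
    vcls (x k) (mat_image P (apt_pos k)) /\ vcls (x (- k%:Z)) (mat_image P (apt_neg k)).
Proof.
case=> x_inj x_adj.
have [L0 x0] := cls_inhabited (x 0).
have [G [uG hG]] := cls_lat x0.
set f1 := G *m col2 1 0; set f2 := G *m col2 0 1.
have x0' : vcls (x 0) (std_lat f1 f2 0 0) by exact: cls_seqv x0 (basis_std_lat hG).
have pos_adj (n : nat) : adj pi (x n) (x n.+1) by rewrite -addn1 PoszD; exact: x_adj.
have neg_adj (n : nat) : adj pi (x (- n%:Z)) (x (- n.+1%:Z)).
  by apply: adj_sym; rewrite (_ : - n%:Z = - n.+1%:Z + 1); [exact: x_adj| lia].
have pos_nb (n : nat) : x n.+2 <> x n by move/x_inj; lia.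
have neg_nb (n : nat) : x (- n.+2%:Z) <> x (- n%:Z) by move/x_inj; lia.
have [c1 [c2 [hc1 hc2 hc12 hcp]]] := ray_direction hc pos_adj pos_nb x0'.
have [d1 [d2 [hd1 hd2 hd12 hdm]]] := ray_direction hc neg_adj neg_nb x0'.
have uD : o_unit (c1 * d2 - c2 * d1).
  apply: det_unit hc1 hc2 hd1 hd2 hc12 hd12 _ => same.
  by have := vertex_eq (hcp 1%N) (hdm 1%N) same => /x_inj; lia.
exists (frame_mx G c1 c2 d1 d2); first exact: frame_unit.
move=> k; split.
  by apply: cls_seqv (hcp k) _; apply: seqv_sym; exact: frame_pos.
by apply: cls_seqv (hdm k) _; apply: seqv_sym; exact: frame_neg.
Qed.

End Tree.

Theorem mainTheorem7 (F : fieldType) (v : F -> int) (pi : F)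
    (hF : nonarch_local_field v pi) (e : nat) (he : (1 <= e)%N)
    (x : int -> vertex v) (hx : dinf_path pi x) :
  exists alpha tau : vertex v -> vertex v,
    [/\ Ghat pi e alpha, Ghat pi e tau &
        forall n : int, alpha (x n) = x (- n) /\ tau (x n) = x (n + 1)].
Proof.
case: hF => hv hc _.
have [P uP hxP] := dinf_path_frame hv hc hx.
have uPi : invmx P \in unitmx by rewrite unitmx_inv.
have uA : P *m Jmx F *m invmx P \in unitmx by rewrite !unitmx_mul uP (Jmx_unit F) uPi.
have uT : P *m Dmx pi *m invmx P \in unitmx by rewrite !unitmx_mul uP (Dmx_unit hv) uPi.
exists (act uA), (act uT); split; try exact: act_Ghat.
case=> k; have [xpk xmk] := hxP k; have [xpk1 xmk1] := hxP k.+1.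
  split; first exact: (act_conj uP uA xpk xmk (Jmx_pos v pi k)).
  rewrite (_ : k%:Z + 1 = k.+1%:Z); last by lia.
  exact: (act_conj uP uT xpk xpk1 (Dmx_pos v pi k)).
rewrite NegzE opprK; split; first exact: (act_conj uP uA xmk1 xpk1 (Jmx_neg v pi k.+1)).
rewrite (_ : - k.+1%:Z + 1 = - k%:Z); last by lia.
have xmk' : vcls (x (- k%:Z)) (mat_image P (scale_set pi (apt_neg v pi k))).
  exact: cls_seqv (cls_scale xmk (pi_neq0 hv)) (seqv_sym (img_scale _ _ _)).
exact: (act_conj uP uT xmk1 xmk' (Dmx_neg v pi k)).
Qed.
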